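(* Let $n>3$ be a natural number, $\varepsilon\in(0,0.5)$ and $\delta\in(0,0.5)$. Let $P(\delta)=(p_{i,j})_{i,j=1}^n$ be the $n\times n$ stochastic matrix with $p_{i,i}=1-\varepsilon$ for all $i$; $p_{1,2}=\varepsilon$; $p_{i,i+1}=(1-\delta)\varepsilon$ for $i=2,\ldots,n-1$; $p_{i+1,i}=\delta\varepsilon$ for $i=1,\ldots,n-2$; $p_{n,n-1}=\varepsilon$; and all other entries equal to $0$. Let $\pi^*(\delta)=(\pi^*_k(\delta))_{k=1}^n$ be the unique probability (row) vector satisfying $\pi^*(\delta)P(\delta)=\pi^*(\delta)$, and let $E_{\pi^*}(\delta)=\sum_{k=1}^n k\,\pi^*_k(\delta)$. Then $$E_{\pi^*}(\delta)=\frac{\delta^{n-2}(2\delta-1)}{2\delta^{n-1}-2(1-\delta)^{n-1}}+\frac{\delta^{n-1}(2\delta-1)}{2(1-\delta)^2(\delta^{n-1}-(1-\delta)^{n-1})}\sum_{k=2}^{n-1}k\left(\frac{1-\delta}{\delta}\right)^k+n\,\frac{(1-\delta)^{n-2}(2\delta-1)}{2\delta^{n-1}-2(1-\delta)^{n-1}},$$ and consequently $$\lim_{\delta\to0^+}E_{\pi^*}(\delta)=\frac{2n-1}{2}.$$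
   Context: $P(\delta)$ is the transition matrix of a Markov chain on states $s_1,\ldots,s_n$ (probability distributions are row vectors multiplied on the left of $P$); $\pi^*(\delta)$ is its stationary distribution and $E_{\pi^*}$ is called the expected state. *)

From HB Require Import structures.
From mathcomp Require Import all_boot all_order all_algebra.
From mathcomp Require Import all_classical all_reals all_analysis.
Set Implicit Arguments. Unset Strict Implicit. Unset Printing Implicit Defensive.
Import Order.TTheory GRing.Theory Num.Theory.
Local Open Scope ring_scope.

(* States s_1..s_n are represented by i : 'I_n with s_k <-> i = k-1. *)
Definition Pmat (R : ringType) (n : nat) (eps delta : R) : 'M[R]_n :=
  \matrix_(i < n, j < n)
    if (i : nat) == (j : nat) then 1 - eps
    else if ((i : nat) == 0%N) && ((j : nat) == 1%N) then eps
    else if [&& (1 <= (i : nat))%N, ((i : nat) <= n - 2)%N & ((j : nat) == (i : nat).+1)]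
      then (1 - delta) * eps                                      (* p_{k,k+1}, k=2..n-1 *)
    else if ((j : nat) <= n - 3)%N && ((i : nat) == (j : nat).+1)
      then delta * eps                                            (* p_{k+1,k}, k=1..n-2 *)
    else if ((i : nat) == n.-1) && ((j : nat) == n.-2) then eps
    else 0.

Definition stationary_prob (R : numDomainType) (n : nat) (P : 'M[R]_n) (pi : 'rV[R]_n) : Prop :=
  (forall i, 0 <= pi 0 i) /\ \sum_(i < n) pi 0 i = 1 /\ pi *m P = pi.

Definition expected_state (R : ringType) (n : nat) (pi : 'rV[R]_n) : R :=
  \sum_(i < n) ((i : nat).+1)%:R * pi 0 i.

Definition E_formula (R : fieldType) (n : nat) (delta : R) : R :=
  delta ^+ (n - 2) * (2 * delta - 1) / (2 * delta ^+ (n - 1) - 2 * (1 - delta) ^+ (n - 1))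
  + delta ^+ (n - 1) * (2 * delta - 1)
      / (2 * (1 - delta) ^+ 2 * (delta ^+ (n - 1) - (1 - delta) ^+ (n - 1)))
      * \sum_(2 <= k < n) k%:R * ((1 - delta) / delta) ^+ k
  + n%:R * ((1 - delta) ^+ (n - 2) * (2 * delta - 1)
      / (2 * delta ^+ (n - 1) - 2 * (1 - delta) ^+ (n - 1))).

From HB Require Import structures.
From mathcomp Require Import all_boot all_order all_algebra.
From mathcomp Require Import all_classical all_reals all_analysis.
From mathcomp Require Import zify ring lra.
Import Order.TTheory GRing.Theory Num.Theory.
Import numFieldNormedType.Exports.
Local Open Scope classical_set_scope.
Local Open Scope ring_scope.
Set Implicit Arguments. Unset Strict Implicit. Unset Printing Implicit Defensive.

(* The chain is a birth-death chain: P is tridiagonal with rows summing to one,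
   so pi is stationary iff the probability flux pi_j p_{j,j+1} - pi_{j+1} p_{j+1,j}
   across every edge vanishes. The weights w_k = delta^(n-2-k) (1-delta)^(k-1)
   balance every edge, hence pi = w / sum w, and sum w is a geometric sum with
   (2 delta - 1) sum w = 2 (delta^(n-1) - (1-delta)^(n-1)); this gives the closed
   form of E. Both sum w and sum (k+1) w_k are polynomials in delta, and at
   delta = 0 only the last two weights survive, both equal to 1, so E tends to
   ((n-1) + n) / 2. *)

Section BirthDeath.
Variables (R : comNzRingType) (n : nat).

Definition nbr_sum (f : nat -> R) j :=
  (if j is i.+1 then f i else 0) + f j + (if (j.+1 < n)%N then f j.+1 else 0).

Lemma sum_tridiag (f : nat -> R) j : (j < n)%N ->
  (forall k, (k.+1 < j)%N || (j.+1 < k)%N -> f k = 0) ->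
  \sum_(0 <= k < n) f k = nbr_sum f j.
Proof.
move=> jn far.
have split_f k : f k = (if (0 < j)%N && (k == j.-1) then f k else 0)
    + (if k == j then f k else 0) + (if k == j.+1 then f k else 0).
  case: j jn far => [|i] jn far /=; do ![case: eqP => ?];
    by rewrite ?addr0 ?add0r // far //; lia.
rewrite (eq_bigr _ (fun k _ => split_f k)) !big_split /= -!big_mkcond /=.
rewrite big_nat1_cond_eq !big_nat1_eq /nbr_sum jn.
by case: j jn {split_f far} => [|i] jn; rewrite ?andbF // (ltnW jn).
Qed.

Variable p : nat -> nat -> R.
Hypothesis p_tridiag : forall i j, (i.+1 < j)%N || (j.+1 < i)%N -> p i j = 0.
Hypothesis p_rows : forall i, (i < n)%N -> \sum_(0 <= j < n) p i j = 1.

Definition flux (q : nat -> R) j := q j * p j j.+1 - q j.+1 * p j.+1 j.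

(* Subtracting [q j] times the row sum of [j] leaves the net flux into [j]. *)
Lemma stationary_defect (q : nat -> R) j : (j < n)%N ->
  \sum_(0 <= k < n) q k * p k j - q j =
  (if j is i.+1 then flux q i else 0) - (if (j.+1 < n)%N then flux q j else 0).
Proof.
move=> jn; have row_j := p_rows jn.
rewrite (sum_tridiag jn) in row_j => [|k far]; last by apply: p_tridiag; rewrite orbC.
rewrite (sum_tridiag jn) => [|k far]; last by rewrite p_tridiag ?mulr0.
rewrite -[X in _ - X]mulr1 -row_j /nbr_sum /flux.
by case: j jn {row_j} => [|i] jn; case: ifP => _; ring.
Qed.

Lemma stationary_fluxP (q : nat -> R) :
  (forall j, (j < n)%N -> \sum_(0 <= k < n) q k * p k j = q j) <->
  (forall j, (j.+1 < n)%N -> flux q j = 0).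
Proof.
split=> [stat | balanced j jn].
- have flux_step j : (j.+1 < n)%N -> flux q j = if j is i.+1 then flux q i else 0.
    move=> jn; have := stationary_defect q (ltnW jn).
    by rewrite stat ?(ltnW jn) // subrr jn => /eqP; rewrite eq_sym subr_eq0 eq_sym => /eqP.
  by elim=> [|j IH] jn; rewrite flux_step // IH // ltnW.
- apply/eqP; rewrite -subr_eq0 (stationary_defect q jn).
  have -> : (if (j.+1 < n)%N then flux q j else 0) = 0 by case: ifP => // /balanced.
  case: j jn => [|i] jn; first by rewrite subrr.
  by rewrite balanced ?subrr.
Qed.

End BirthDeath.

Lemma balanced_proportional (R : fieldType) (p : nat -> nat -> R) n (q w : nat -> R) :
  (forall j, (j.+1 < n)%N -> p j.+1 j != 0) ->
  (forall j, (j.+1 < n)%N -> flux p q j = 0) ->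
  (forall j, (j.+1 < n)%N -> flux p w j = 0) ->
  forall k, (k < n)%N -> q k * w 0%N = q 0%N * w k.
Proof.
move=> down_neq0 q_bal w_bal; elim=> [//|k IH] kn.
apply: (mulIf (down_neq0 k kn)).
move: (q_bal k kn) (w_bal k kn); rewrite /flux => /eqP + /eqP.
rewrite !subr_eq0 => /eqP q_flux /eqP w_flux.
by rewrite mulrAC -q_flux mulrAC IH ?(ltnW kn) // -mulrA w_flux mulrA.
Qed.

(* The entries of [Pmat] on nat indices, where the neighbours of a state need no
   ordinal arithmetic. *)
Definition chain_p (R : nzRingType) (n : nat) (eps delta : R) (i j : nat) : R :=
  if i == j then 1 - eps
  else if (i == 0%N) && (j == 1%N) then eps
  else if [&& (1 <= i)%N, (i <= n - 2)%N & (j == i.+1)] then (1 - delta) * eps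
  else if (j <= n - 3)%N && (i == j.+1) then delta * eps
  else if (i == n.-1) && (j == n.-2) then eps
  else 0.

Lemma chain_p_far (R : nzRingType) n (eps delta : R) i j :
  (i.+1 < j)%N || (j.+1 < i)%N -> chain_p n eps delta i j = 0.
Proof. by move=> far; rewrite /chain_p; do ![case: ifP => // ?]; lia. Qed.

Lemma chain_p_up (R : nzRingType) n (eps delta : R) j : (j.+1 < n)%N ->
  chain_p n eps delta j j.+1 = if j == 0%N then eps else (1 - delta) * eps.
Proof. by move=> jn; rewrite /chain_p; do ![case: ifP => // ?]; lia. Qed.

(* For n = 2 the truncated [n - 3] makes p_{2,1} equal to [delta * eps]. *)
Lemma chain_p_down (R : nzRingType) n (eps delta : R) j : (2 < n)%N -> (j.+1 < n)%N ->
  chain_p n eps delta j.+1 j = if j.+2 == n then eps else delta * eps.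
Proof. by move=> n_gt2 jn; rewrite /chain_p; do ![case: ifP => // ?]; lia. Qed.

Lemma PmatE (R : nzRingType) n (eps delta : R) (i j : 'I_n) :
  Pmat n eps delta i j = chain_p n eps delta i j.
Proof. by rewrite mxE. Qed.

Lemma chain_p_diag (R : nzRingType) n (eps delta : R) j : chain_p n eps delta j j = 1 - eps.
Proof. by rewrite /chain_p eqxx. Qed.

Lemma mulmx_PmatE (R : nzRingType) n (eps delta : R) (pi : 'rV[R]_n) (q : nat -> R) j :
  (forall i : 'I_n, pi 0 i = q i) ->
  (pi *m Pmat n eps delta) 0 j = \sum_(0 <= k < n) q k * chain_p n eps delta k j.
Proof.
by move=> pi_q; rewrite mxE big_mkord; apply: eq_bigr => i _; rewrite pi_q PmatE.
Qed.

Lemma chain_p_rows (R : comNzRingType) n (eps delta : R) : (2 < n)%N ->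
  forall i, (i < n)%N -> \sum_(0 <= j < n) chain_p n eps delta i j = 1.
Proof.
move=> n_gt2 i i_n; rewrite (sum_tridiag i_n) => [|j far]; last first.
  by apply: chain_p_far; rewrite orbC.
rewrite /nbr_sum chain_p_diag; case: i i_n => [|i] i_n.
  by rewrite (ltnW n_gt2) chain_p_up ?(ltnW n_gt2) //=; ring.
rewrite chain_p_down //; case: eqP => [<-|not_last]; first by rewrite ltnn; ring.
have i2_n : (i.+2 < n)%N by lia.
by rewrite i2_n chain_p_up //=; ring.
Qed.

Definition chain_weight (R : nzRingType) n (delta : R) k :=
  delta ^+ (n - 2 - k) * (1 - delta) ^+ (k - 1).

Lemma chain_weight_flux (R : comNzRingType) n (eps delta : R) : (2 < n)%N ->
  forall j, (j.+1 < n)%N -> flux (chain_p n eps delta) (chain_weight n delta) j = 0.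
Proof.
move=> n_gt2 j jn; rewrite /flux chain_p_up // chain_p_down // /chain_weight.
case: eqP => [->|j_gt0]; case: eqP => [j_last|j_inner]; try lia.
- rewrite (_ : (n - 2 - 0 = (n - 2 - 1).+1)%N); last lia.
  by rewrite sub0n subnn exprS; ring.
- rewrite (_ : (n - 2 - j = 0)%N); last lia.
  rewrite (_ : (n - 2 - j.+1 = 0)%N); last lia.
  rewrite (_ : (j.+1 - 1 = (j - 1).+1)%N); last lia.
  by rewrite exprS; ring.
- rewrite (_ : (n - 2 - j = (n - 2 - j.+1).+1)%N); last lia.
  rewrite (_ : (j.+1 - 1 = (j - 1).+1)%N); last lia.
  by rewrite !exprS; ring.
Qed.

Lemma chain_weight0 (R : nzRingType) n (delta : R) :
  chain_weight n delta 0 = delta ^+ (n - 2).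
Proof. by rewrite /chain_weight subn0 sub0n mulr1. Qed.

Lemma chain_weight_last (R : nzRingType) n (delta : R) :
  chain_weight n delta n.-1 = (1 - delta) ^+ (n - 2).
Proof.
rewrite /chain_weight (_ : (n - 2 - n.-1 = 0)%N); last lia.
by rewrite (_ : (n.-1 - 1 = n - 2)%N) ?mul1r //; lia.
Qed.

Definition chain_weight_sum (R : nzRingType) n (delta : R) :=
  \sum_(0 <= k < n) chain_weight n delta k.

Lemma chain_weight_sumE (R : comNzRingType) n (delta : R) : (1 < n)%N ->
  chain_weight_sum n delta * (2 * delta - 1) = 2 * (delta ^+ (n - 1) - (1 - delta) ^+ (n - 1)).
Proof.
case: n => [|[|m]] // _.
rewrite /chain_weight_sum big_nat_recr //= big_ltn // big_add1 /=.
have inner : (\sum_(0 <= i < m) chain_weight m.+2 delta i.+1) * (2 * delta - 1) =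
             delta ^+ m - (1 - delta) ^+ m.
  rewrite subrXX mulrC; congr (_ * _); first ring.
  rewrite big_mkord; apply: eq_bigr => i _; rewrite /chain_weight.
  by congr (_ ^+ _ * _ ^+ _); lia.
rewrite mulrDl mulrDl inner chain_weight0 (@chain_weight_last _ m.+2) !subSS !subn0.
by rewrite !exprS; ring.
Qed.

Lemma chain_weight_ge0 (R : numDomainType) n (delta : R) k :
  0 <= delta <= 1 -> 0 <= chain_weight n delta k.
Proof.
by case/andP=> d_ge0 d_le1; rewrite /chain_weight mulr_ge0 ?exprn_ge0 ?subr_ge0.
Qed.

Lemma chain_weight_sum_gt0 (R : numDomainType) n (delta : R) : (0 < n)%N ->
  0 < delta < 1 -> 0 < chain_weight_sum n delta.
Proof.
move=> n_gt0 /andP[d_gt0 d_lt1]; rewrite /chain_weight_sum big_ltn //.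
have w0_gt0 : 0 < chain_weight n delta 0 by rewrite mulr_gt0 ?exprn_gt0 ?subr_gt0.
rewrite (lt_le_trans w0_gt0) // lerDl sumr_ge0 // => k _.
by rewrite chain_weight_ge0 // !ltW.
Qed.

Definition chain_pi (R : fieldType) n (delta : R) : 'rV[R]_n :=
  \row_(i < n) (chain_weight n delta i / chain_weight_sum n delta).

Section ChainStationary.
Variables (R : realFieldType) (n : nat) (eps delta : R).
Hypotheses (n_gt2 : (2 < n)%N) (delta01 : 0 < delta < 1).

Let chain_fluxP :=
  stationary_fluxP (@chain_p_far R n eps delta) (chain_p_rows eps delta n_gt2).
Let S_gt0 := chain_weight_sum_gt0 (ltnW (ltnW n_gt2)) delta01.

Lemma chain_pi_stationary : stationary_prob (Pmat n eps delta) (chain_pi n delta).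
Proof.
have /andP[d_gt0 d_lt1] := delta01.
split; [|split].
- by move=> i; rewrite mxE divr_ge0 ?chain_weight_ge0 ?ltW // !ltW.
- rewrite (eq_bigr _ (fun i _ => mxE _ _ _ _)) -mulr_suml /=.
  by rewrite -(big_mkord xpredT (chain_weight n delta)) divff // lt0r_neq0.
- have w_stat := (chain_fluxP (chain_weight n delta)).2 (chain_weight_flux eps delta n_gt2).
  pose q k := chain_weight n delta k / chain_weight_sum n delta.
  have pi_q (i : 'I_n) : chain_pi n delta 0 i = q i by rewrite mxE.
  apply/rowP => j; rewrite (mulmx_PmatE eps delta j pi_q) mxE -w_stat //.
  by rewrite mulr_suml; apply: eq_bigr => k _; rewrite mulrAC.
Qed.

Lemma chain_pi_unique (pi : 'rV[R]_n) : 0 < eps ->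
  stationary_prob (Pmat n eps delta) pi -> pi = chain_pi n delta.
Proof.
move=> eps_gt0 [_ [pi_sum pi_stat]]; have /andP[d_gt0 d_lt1] := delta01.
pose q k := if insub k is Some i then pi 0 i else 0.
have pi_q (i : 'I_n) : pi 0 i = q i by rewrite /q valK.
have q_bal j : (j.+1 < n)%N -> flux (chain_p n eps delta) q j = 0.
  apply: (chain_fluxP q).1.
  move=> {}j jn; rewrite -(mulmx_PmatE eps delta (Ordinal jn) pi_q) pi_stat.
  exact: pi_q (Ordinal jn).
have down_neq0 j : (j.+1 < n)%N -> chain_p n eps delta j.+1 j != 0.
  by move=> jn; rewrite chain_p_down //; case: ifP; rewrite lt0r_neq0 ?mulr_gt0.
have prop := balanced_proportional down_neq0 q_bal (chain_weight_flux eps delta n_gt2).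
have w0_neq0 : chain_weight n delta 0 != 0.
  by rewrite mulf_neq0 ?expf_neq0 ?lt0r_neq0 ?subr_gt0.
have q0_S : q 0%N * chain_weight_sum n delta = chain_weight n delta 0.
  rewrite /chain_weight_sum mulr_sumr -[RHS]mul1r -pi_sum mulr_suml big_mkord.
  by apply: eq_bigr => i _; rewrite -prop // pi_q mulrC.
have S_neq0 := lt0r_neq0 S_gt0.
apply/rowP => i; rewrite pi_q mxE; apply: (mulIf w0_neq0).
by rewrite prop // -q0_S; field.
Qed.

End ChainStationary.

Definition chain_moment (R : nzRingType) n (delta : R) :=
  \sum_(0 <= k < n) (k.+1)%:R * chain_weight n delta k.

Lemma chain_momentE (R : comNzRingType) n (delta : R) : (1 < n)%N ->
  chain_moment n delta = delta ^+ (n - 2)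
    + \sum_(2 <= k < n) k%:R * chain_weight n delta k.-1 + n%:R * (1 - delta) ^+ (n - 2).
Proof.
case: n => [|[|m]] // _.
rewrite /chain_moment big_nat_recr //= big_ltn // [in RHS]big_add1 /=.
by rewrite chain_weight0 (@chain_weight_last _ m.+2) mul1r.
Qed.

Lemma chain_weight_geometric (R : fieldType) n (delta : R) k :
  delta != 0 -> 1 - delta != 0 -> (2 <= k < n)%N ->
  chain_weight n delta k.-1 = delta ^+ (n - 1) / (1 - delta) ^+ 2 * ((1 - delta) / delta) ^+ k.
Proof.
move=> d_neq0 d_neq1 /andP[k_ge2 k_lt_n]; rewrite /chain_weight expr_div_n.
rewrite (_ : (n - 1 = (n - 2 - k.-1) + k)%N); last lia.
rewrite [X in (1 - delta) ^+ X / _](_ : k = (k.-1 - 1 + 2)%N); last lia.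
by rewrite !exprD; field; rewrite !expf_neq0.
Qed.

Lemma chain_expectationE (R : realFieldType) n (delta : R) : (1 < n)%N ->
  0 < delta < 1 -> 2 * delta != 1 ->
  chain_moment n delta / chain_weight_sum n delta = E_formula n delta.
Proof.
move=> n_gt1 d01 d_neq_half; have /andP[d_gt0 d_lt1] := d01.
have S_gt0 := chain_weight_sum_gt0 (ltnW n_gt1) d01.
have S_def := chain_weight_sumE delta n_gt1.
have d_neq0 : delta != 0 by rewrite gt_eqF.
have d_neq1 : 1 - delta != 0 by rewrite subr_eq0 gt_eqF.
have two_d_neq1 : 2 * delta - 1 != 0 by rewrite subr_eq0.
have D_neq0 : delta ^+ (n - 1) - (1 - delta) ^+ (n - 1) != 0.
  apply/eqP => D0; have := mulf_neq0 (lt0r_neq0 S_gt0) two_d_neq1.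
  by rewrite S_def D0 mulr0 eqxx.
rewrite chain_momentE // /E_formula.
under eq_big_nat => k /(chain_weight_geometric d_neq0 d_neq1) -> do rewrite mulrCA.
rewrite -mulr_sumr -[chain_weight_sum n delta](mulfK two_d_neq1) S_def.
by field; rewrite -mulrBr mulf_eq0 negb_or pnatr_eq0 D_neq0 d_neq1 two_d_neq1.
Qed.

Lemma expected_state_chain_pi (R : fieldType) n (delta : R) :
  expected_state (chain_pi n delta) = chain_moment n delta / chain_weight_sum n delta.
Proof.
rewrite /expected_state /chain_moment mulr_suml big_mkord.
by apply: eq_bigr => i _; rewrite mxE mulrA.
Qed.

Lemma chain_weight_at0 (R : nzRingType) n k : chain_weight n (0 : R) k = (n - 2 <= k)%:R.
Proof. by rewrite /chain_weight expr0n subr0 expr1n mulr1 subn_eq0. Qed.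

Lemma chain_weight_sum_at0 (R : nzRingType) n : (1 < n)%N -> chain_weight_sum n (0 : R) = 2.
Proof.
case: n => [|[|m]] // _; rewrite /chain_weight_sum !big_nat_recr //= big_nat_cond big1.
  by rewrite !chain_weight_at0 subn2 leqnn leqnSn add0r.
by move=> k /andP[/andP[_ k_lt_m] _]; rewrite chain_weight_at0 subn2 leqNgt k_lt_m.
Qed.

Lemma chain_moment_at0 (R : nzRingType) n : (1 < n)%N ->
  chain_moment n (0 : R) = (n.-1 + n)%:R.
Proof.
case: n => [|[|m]] // _; rewrite /chain_moment !big_nat_recr //= big_nat_cond big1.
  by rewrite !chain_weight_at0 subn2 leqnn leqnSn add0r !mulr1 natrD.
by move=> k /andP[/andP[_ k_lt_m] _]; rewrite chain_weight_at0 subn2 leqNgt k_lt_m mulr0.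
Qed.

Definition chain_weight_poly (R : nzRingType) n k : {poly R} :=
  'X^(n - 2 - k) * (1 - 'X) ^+ (k - 1).

Lemma chain_weight_polyE (R : comNzRingType) n k (x : R) :
  (chain_weight_poly R n k).[x] = chain_weight n x k.
Proof. by rewrite hornerM hornerXn horner_exp hornerD hornerN hornerX hornerC. Qed.

Lemma chain_expectation_cvg0 (R : realType) n : (1 < n)%N ->
  (fun d : R => chain_moment n d / chain_weight_sum n d) @ 0 --> ((2 * n%:R - 1) / 2 : R).
Proof.
move=> n_gt1.
pose N : {poly R} := \sum_(0 <= k < n) (k.+1)%:R *: chain_weight_poly R n k.
pose D : {poly R} := \sum_(0 <= k < n) chain_weight_poly R n k.
have NE x : chain_moment n x = N.[x].
  by rewrite horner_sum; apply: eq_bigr => k _; rewrite hornerZ chain_weight_polyE.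
have DE x : chain_weight_sum n x = D.[x].
  by rewrite horner_sum; apply: eq_bigr => k _; rewrite chain_weight_polyE.
have D0_neq0 : D.[0] != 0 by rewrite -DE chain_weight_sum_at0 ?pnatr_eq0.
have -> : (2 * n%:R - 1) / 2 = N.[0] / D.[0] :> R.
  rewrite -NE -DE chain_moment_at0 // chain_weight_sum_at0 //.
  by case: n n_gt1 {NE DE D0_neq0 N D} => [|n] //= _; rewrite natrD -natr1; ring.
rewrite (funext (fun x => congr2 (fun a b => a / b) (NE x) (DE x))).
exact: cvgM (@continuous_horner _ N 0) (cvgV D0_neq0 (@continuous_horner _ D 0)).
Qed.

Lemma expected_state_cvg0 (R : realType) n (eps : R) (piF : R -> 'rV[R]_n) :
  (2 < n)%N -> 0 < eps ->
  (\forall d \near (0 : R)^'+, stationary_prob (Pmat n eps d) (piF d)) ->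
  (fun d => expected_state (piF d)) @ (0 : R)^'+ --> ((2 * n%:R - 1) / 2 : R).
Proof.
move=> n_gt2 eps_gt0 piF_stat.
have chain_pi_near : \forall d \near (0 : R)^'+,
    chain_moment n d / chain_weight_sum n d = expected_state (piF d).
  near=> d.
  have d01 : 0 < d < 1.
    by apply/andP; split; near: d; [exact: nbhs_right_gt | exact/nbhs_right_lt/ltr01].
  have stat_d : stationary_prob (Pmat n eps d) (piF d) by near: d.
  by rewrite (chain_pi_unique n_gt2 d01 eps_gt0 stat_d) expected_state_chain_pi.
apply: cvg_trans (near_eq_cvg chain_pi_near) _.
by apply: cvg_at_right_filter; exact: chain_expectation_cvg0 (ltnW n_gt2).
Unshelve. all: by end_near.
Qed.

Theorem theorem3p2 (R : realType) (n : nat) (eps delta : R) :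
  (3 < n)%N -> 0 < eps < 1 / 2 -> 0 < delta < 1 / 2 ->
  (exists! pi : 'rV[R]_n, stationary_prob (Pmat n eps delta) pi) /\
  (forall pi : 'rV[R]_n, stationary_prob (Pmat n eps delta) pi ->
     expected_state pi = E_formula n delta) /\
  (forall piF : R -> 'rV[R]_n,
     (forall d : R, 0 < d < 1 / 2 -> stationary_prob (Pmat n eps d) (piF d)) ->
     (fun x : R => expected_state (piF x)) @ (0 : R)^'+ --> ((2 * n%:R - 1) / 2 : R)).
Proof.
move=> n_gt3 /andP[eps_gt0 _] /andP[d_gt0 d_lt_half].
have n_gt2 := ltnW n_gt3; have n_gt1 := ltnW n_gt2.
have d01 : 0 < delta < 1 by rewrite d_gt0; lra.
split; [|split].
- exists (chain_pi n delta); split; first exact: chain_pi_stationary.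
  by move=> pi /(chain_pi_unique n_gt2 d01 eps_gt0) ->.
- move=> pi /(chain_pi_unique n_gt2 d01 eps_gt0) ->.
  by rewrite expected_state_chain_pi chain_expectationE // lt_eqF //; lra.
- move=> piF piF_stat; apply: expected_state_cvg0 n_gt2 eps_gt0 _.
  near=> d; apply: piF_stat; apply/andP; split; near: d; first exact: nbhs_right_gt.
  by apply: nbhs_right_lt; lra.
Unshelve. all: by end_near.
Qed.
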